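(* Let $p\geq 5$ be a prime and let $r$ be a positive integer such that $3$ does not divide $p^{r}+1$. Then $A(x)=x^{p^r+2}$ is an Alltop function on $\mathbb{F}_{p^{2r}}$.
   Context: For a function $f:\mathbb{F}_{p^n}\to\mathbb{F}_{p^n}$ and $a\in\mathbb{F}_{p^n}$, the difference function is $\Delta_{f,a}(x)=f(x+a)-f(x)$. A function $f:\mathbb{F}_{p^n}\to\mathbb{F}_{p^n}$ is planar if for every $a\in\mathbb{F}_{p^n}^*$ the map $x\mapsto\Delta_{f,a}(x)$ is a bijection of $\mathbb{F}_{p^n}$. A function $A:\mathbb{F}_{p^n}\to\mathbb{F}_{p^n}$ is an Alltop function if $\Delta_{A,a}$ is a planar function for every $a\in\mathbb{F}_{p^n}^*$. *)

From mathcomp Require Import all_boot all_order all_algebra all_field.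
Set Implicit Arguments. Unset Strict Implicit. Unset Printing Implicit Defensive.
Import GRing.Theory.
Local Open Scope ring_scope.

Definition diff_fun (F : finFieldType) (f : F -> F) (a : F) : F -> F :=
  fun x => f (x + a) - f x.

Definition planar (F : finFieldType) (f : F -> F) : Prop :=
  forall a : F, a != 0 -> bijective (diff_fun f a).

Definition alltop (F : finFieldType) (A : F -> F) : Prop :=
  forall a : F, a != 0 -> planar (diff_fun A a).

(* The second difference D of x |-> x^(q+2), q = p^r, is affine: D x - D y = 2 L (x - y) with
   L z = a b z^q + (a b^q + a^q b) z, which is additive because z |-> z^q is the involutive
   Frobenius of F = GF(q^2).  If L z = 0 with z != 0, applying the Frobenius and eliminating z
   gives u^2 + u u^q + u^(2q) = 0 for u = a b^q, so w = u^(q-1) is a primitive cube root of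
   unity (the characteristic is not 3).  But w^(q+1) = u^(q^2-1) = 1, forcing 3 | q + 1. *)

From mathcomp Require Import all_boot all_order all_algebra all_field.
From mathcomp Require Import ring.
Set Implicit Arguments. Unset Strict Implicit. Unset Printing Implicit Defensive.
Local Open Scope ring_scope.
Import GRing.Theory.

Lemma cube_root_prim_root (R : comNzRingType) (w : R) :
  3%:R != 0 :> R -> w ^+ 2 + w + 1 = 0 -> 3.-primitive_root w.
Proof.
move=> three_neq0 w2; have w3 : w ^+ 3 = 1.
  apply/eqP; rewrite -subr_eq0; apply/eqP.
  have -> : w ^+ 3 - 1 = (w - 1) * (w ^+ 2 + w + 1) by ring.
  by rewrite w2 mulr0.
have [m prim_m m_dvd3] := prim_order_exists (isT : (0 < 3)%N) w3.
case: m prim_m m_dvd3 => [|[|[|[|m]]]] // prim_1 _.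
have w1 : w = 1 by rewrite -[w]expr1 (prim_expr_order prim_1).
by move: three_neq0; rewrite -w2 w1 expr1n -mulr2n -mulrSr eqxx.
Qed.

Lemma bij_of_diff_kernel (F : finFieldType) (g L : F -> F) :
  (forall x y, g x - g y = L (x - y)) -> (forall z, L z = 0 -> z = 0) ->
  bijective g.
Proof.
move=> gL kerL; apply: injF_bij => x y gxy.
by apply/eqP; rewrite -subr_eq0; apply/eqP/kerL; rewrite -gL gxy subrr.
Qed.

Section FrobeniusInvolution.

Variables (F : finFieldType) (q : nat).
Hypothesis q_gt0 : (0 < q)%N.
Hypothesis frobD : forall x y : F, (x + y) ^+ q = x ^+ q + y ^+ q.
Hypothesis frobK : forall x : F, (x ^+ q) ^+ q = x.

Lemma frob0 : 0 ^+ q = 0 :> F.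
Proof. by rewrite expr0n eqn0Ngt q_gt0. Qed.

Lemma frobB (x y : F) : (x - y) ^+ q = x ^+ q - y ^+ q.
Proof. by apply/eqP; rewrite eq_sym subr_eq -frobD subrK. Qed.

Definition diff2_lin (a b z : F) : F :=
  a * b * z ^+ q + (a * b ^+ q + a ^+ q * b) * z.

Lemma diff2_powerE (a b x y : F) :
  diff_fun (diff_fun (fun x : F => x ^+ (q + 2)) a) b x
  - diff_fun (diff_fun (fun x : F => x ^+ (q + 2)) a) b y
  = 2%:R * diff2_lin a b (x - y).
Proof. by rewrite /diff_fun /diff2_lin frobB !exprD !frobD; ring. Qed.

Lemma diff2_lin_eq0 (a b z : F) : z != 0 -> diff2_lin a b z = 0 ->
  let u := a * b ^+ q in u ^+ 2 + u * u ^+ q + (u ^+ q) ^+ 2 = 0.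
Proof.
move=> z_neq0 Lz u; set t := a * b ^+ q + a ^+ q * b.
have tq : t ^+ q = t by rewrite /t frobD !exprMn !frobK addrC.
have Lzq : a ^+ q * b ^+ q * z + t * z ^+ q = 0.
  by rewrite -frob0 -Lz frobD !exprMn frobK tq.
have zzq_neq0 : z * z ^+ q != 0 by rewrite mulf_neq0 ?expf_neq0.
(* eliminate z between L z = 0 and its Frobenius image *)
have det : (a * b * (a ^+ q * b ^+ q) - t ^+ 2) * (z * z ^+ q) =
    diff2_lin a b z * (a ^+ q * b ^+ q * z) - t * z * (a ^+ q * b ^+ q * z + t * z ^+ q).
  by rewrite /diff2_lin -/t; ring.
rewrite Lz Lzq mul0r mulr0 subr0 in det.
move/eqP: det; rewrite mulf_eq0 (negbTE zzq_neq0) orbF subr_eq0 => /eqP det.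
have uq : u ^+ q = a ^+ q * b by rewrite /u exprMn frobK.
have -> : u ^+ 2 + u * u ^+ q + (u ^+ q) ^+ 2 = t ^+ 2 - a * b * (a ^+ q * b ^+ q).
  by rewrite uq /u /t; ring.
by rewrite det subrr.
Qed.

Lemma frob_ratio_order (u : F) : u != 0 -> (u ^+ q / u) ^+ (q + 1) = 1.
Proof.
move=> u_neq0; have uq_neq0 : u ^+ q != 0 by rewrite expf_neq0.
by rewrite exprD expr1 exprMn exprVn frobK; field; rewrite u_neq0 uq_neq0.
Qed.

Lemma diff2_lin_inj (a b z : F) :
  a != 0 -> b != 0 -> 3%:R != 0 :> F -> ~~ (3 %| q + 1)%N ->
  diff2_lin a b z = 0 -> z = 0.
Proof.
move=> a_neq0 b_neq0 three_neq0 q1_n3 Lz; apply/eqP/negPn/negP => z_neq0.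
have := diff2_lin_eq0 z_neq0 Lz; set u := a * b ^+ q => uquad.
have u_neq0 : u != 0 by rewrite mulf_neq0 ?expf_neq0.
have prim_w : 3.-primitive_root (u ^+ q / u).
  apply: cube_root_prim_root => //.
  apply: (mulIf (expf_neq0 2 u_neq0)); rewrite mul0r -uquad; field; exact: u_neq0.
by move: q1_n3; rewrite (prim_order_dvd prim_w) frob_ratio_order ?eqxx.
Qed.

End FrobeniusInvolution.

Theorem theorem4 (p r : nat) (F : finFieldType) :
  prime p -> (5 <= p)%N -> (0 < r)%N -> ~~ (3 %| p ^ r + 1)%N ->
  #|F| = (p ^ (2 * r))%N ->
  alltop (fun x : F => x ^+ (p ^ r + 2)).
Proof.
move=> p_pr p_ge5 _ q1_n3 cardF a a_neq0 b b_neq0.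
have pcharF : p \in [pchar F] by apply: card_finPcharP cardF p_pr.
have q_gt0 : (0 < p ^ r)%N by rewrite expn_gt0 prime_gt0.
have frobD (x y : F) : (x + y) ^+ (p ^ r) = x ^+ (p ^ r) + y ^+ (p ^ r).
  by apply: exprDn_pchar; rewrite pnatX (pnatE _ p_pr) pcharF.
have frobK (x : F) : (x ^+ (p ^ r)) ^+ (p ^ r) = x.
  by rewrite -exprM -expnD addnn -muln2 mulnC -cardF expf_card.
have small_neq0 n : (0 < n < p)%N -> n%:R != 0 :> F.
  case/andP=> n_gt0 n_lt_p; rewrite -(dvdn_pcharf pcharF).
  by apply/negP => /(dvdn_leq n_gt0); rewrite leqNgt n_lt_p.
apply: (@bij_of_diff_kernel _ _ (fun z => 2%:R * diff2_lin (p ^ r) a b z))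
  => [x y | z /eqP].
  exact: diff2_powerE.
rewrite mulf_eq0 (negbTE (small_neq0 2 _)) ?(leq_trans _ p_ge5) //= => /eqP.
by apply: diff2_lin_inj; rewrite ?small_neq0 ?(leq_trans _ p_ge5).
Qed.
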